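(* There is no finite, simple, connected, regular plane graph with at least two faces in which all faces but one have the same length and the remaining single face has a different length. In other words, there is no $1$-nearly platonic graph.
   Context: A plane graph is a planar graph with a fixed embedding in the plane; its faces are the connected regions of the complement of the drawing. The length of a face is the total length of the closed walk(s) bounding it (a cut-edge contributes twice). A $1$-nearly platonic graph is a finite, connected, simple, regular plane graph with $f\ge 2$ faces such that $f-1$ of its faces all have the same length $d_1$ and the remaining face has length $d_2\ne d_1$, where $d_1,d_2\ge 3$. *)

(* Plane graphs are encoded combinatorially as rotation
   systems (combinatorial maps) of genus 0. *)
From mathcomp Require Import all_boot.
Set Implicit Arguments. Unset Strict Implicit. Unset Printing Implicit Defensive.

(* A combinatorial map on the finite set D of darts (half-edges):
   - e : the edge involution, fixed-point free (each edge = 2 darts);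
   - n : the vertex rotation, a permutation (cyclic order of darts around
         each vertex, given by the embedding).
   Vertices = orbits of n, edges = orbits of e, faces = orbits of the
   face permutation face e n := n \o e.  The length of a face is the size
   of its orbit (number of darts traversed by the facial walk, so a
   cut-edge is counted twice). *)

Definition face (D : finType) (e n : D -> D) : D -> D := fun x => n (e x).

Definition is_map (D : finType) (e n : D -> D) : Prop :=
  [/\ cancel e e, forall x, e x != x & injective n].

Definition map_connected (D : finType) (e n : D -> D) : Prop :=
  forall x y : D, connect (fun u v => (v == e u) || (v == n u)) x y.

Definition num_vertices (D : finType) (e n : D -> D) : nat := fcard n D.
Definition num_edges (D : finType) (e n : D -> D) : nat := fcard e D.
Definition num_faces (D : finType) (e n : D -> D) : nat := fcard (face e n) D.

(* genus 0 (Euler's formula V - E + F = 2): the map is a plane embedding *)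
Definition planar_map (D : finType) (e n : D -> D) : Prop :=
  num_vertices e n + num_faces e n = num_edges e n + 2.

Definition plane_map (D : finType) (e n : D -> D) : Prop :=
  [/\ is_map e n, map_connected e n & planar_map e n].

(* simple underlying graph: no loops, no multiple edges *)
Definition simple_map (D : finType) (e n : D -> D) : Prop :=
  (forall x : D, ~~ fconnect n x (e x)) /\
  (forall x y : D, fconnect n x y -> fconnect n (e x) (e y) -> x = y).

Definition regular_map (D : finType) (e n : D -> D) : Prop :=
  forall x y : D, order n x = order n y.

Definition face_length (D : finType) (e n : D -> D) (x : D) : nat :=
  order (face e n) x.

Definition one_nearly_platonic (D : finType) (e n : D -> D) : Prop :=
  [/\ plane_map e n, simple_map e n, regular_map e n,
      2 <= num_faces e n &
      exists (d1 d2 : nat) (x0 : D),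
        [/\ 3 <= d1, 3 <= d2, d1 != d2,
            face_length e n x0 = d2 &
            forall x : D, ~~ fconnect (face e n) x0 x ->
                          face_length e n x = d1]].

(* Let N be the number of darts of a k-regular plane map with one face of length r and all
   other faces of length d.  Counting vertices, edges and faces in Euler's formula gives
   N (2k + 2d - kd) = 2k (d + r), so k <= 2 or (k, d) is the type of a platonic solid.
   For k = 1 this count is already impossible; for k = 2 the map is a cycle with two faces,
   which the edge involution maps into each other, so r = d.
   Otherwise let P be the platonic map of type (k, d); its M darts satisfy
   M (2k + 2d - kd) = 4kd.  The connected component C of (x0, p0) in the product map
   D x P covers D with a sheets and P with b sheets, and aN = bM gives a (d + r) = 2bd.
   If a = 1, the face of x0 lifts to a single face lying over the face of p0, so r <= bd,
   which forces b = 1 and r = d.  If a >= 2, the vertices of C have degree at most k, the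
   faces over ordinary faces of D length at most d and those over the special face length
   at most rd; the genus inequality V - E + F <= 2, valid for every connected map, then
   gives a (d + 1) <= 2d, which is impossible. *)

From mathcomp Require Import all_boot all_fingroup zify ring.
Import fingraph. (* [order] is the orbit length of fingraph, not the order of fingroup *)
Set Implicit Arguments. Unset Strict Implicit. Unset Printing Implicit Defensive.

Definition mrel (T : eqType) (e n : T -> T) : rel T :=
  fun u v => (v == e u) || (v == n u).

Lemma connect_ind (T : finType) (r : rel T) (P : pred T) x y :
  connect r x y -> P x -> (forall u v, r u v -> P u -> P v) -> P y.
Proof.
move/connectP => [p pth ->] Px rP.
by elim: p x pth Px => //= z p IH x /andP[rxz pth] Px; apply: IH pth (rP _ _ rxz Px).
Qed.

Lemma mrel_connect_sym (T : finType) (e n : T -> T) :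
  injective e -> injective n -> connect_sym (mrel e n).
Proof.
move=> ei ni.
have back f : injective f -> (forall u, mrel e n u (f u)) -> forall u, connect (mrel e n) (f u) u.
  move=> fi f_rel u; have : fconnect f (f u) u by rewrite (fconnect_sym fi) fconnect1.
  by apply: connect_sub => v _ /eqP <-; apply: connect1.
have dir x y : connect (mrel e n) x y -> connect (mrel e n) y x.
  move=> cxy; apply: (connect_ind cxy (P := connect (mrel e n)^~ x)) => // u v.
  move=> /orP[] /eqP -> /(connect_trans _); apply.
    by apply: back ei _ u => w; rewrite /mrel eqxx.
  by apply: back ni _ u => w; rewrite /mrel eqxx orbT.
by move=> x y; apply/idP/idP; apply: dir.
Qed.

Section PermOrbits.
Variable T : finType.
Implicit Types (s t : {perm T}) (x y : T).

Lemma porbit_fconnect s x y : (y \in porbit s x) = fconnect s x y.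
Proof.
apply/porbitP/idP => [[i ->]|h]; first by rewrite permX; apply: fconnect_iter.
by exists (findex s x y); rewrite permX iter_findex.
Qed.

Lemma fcard_porbits s : fcard s T = #|porbits s|.
Proof.
have symf := fconnect_sym (@perm_inj _ s).
have -> : porbits s = porbit s @: [set x | froots s x].
  apply/setP => P; apply/imsetP/imsetP => [[x _ ->]|[x _ ->]]; last by exists x.
  exists (froot s x); first by rewrite inE roots_root.
  by apply/eqP; rewrite eq_porbit_mem porbit_fconnect symf connect_root.
rewrite card_in_imset; first by apply: eq_card => x; rewrite !inE andbT.
move=> x y; rewrite !inE => /eqP rx /eqP ry /eqP.
by rewrite eq_porbit_mem porbit_fconnect => /(rootP symf); rewrite rx ry.
Qed.

Lemma card_porbits_le s : #|porbits s| <= #|T|.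
Proof. exact: leq_imset_card. Qed.

Lemma card_porbits1 : #|porbits (1 : {perm T})| = #|T|.
Proof.
rewrite card_imset // => x y /eqP; rewrite eq_porbit_mem => /porbitP[i ->].
by rewrite expg1n perm1.
Qed.

Lemma card_porbits_tpermM_le s x y : #|porbits (tperm x y * s)| <= #|porbits s| + 1.
Proof.
by have := porbits_mul_tperm s x y; case: (x != y); case: (x \notin _) => /=; lia.
Qed.

Lemma card_porbits_tperm_split t x : t x != x ->
  #|porbits (tperm x (t x) * t)| = #|porbits t| + 1.
Proof.
move=> tx_x; have := porbits_mul_tperm t x (t x).
have tx_orbit : t x \in porbit t x by have := mem_porbit t 1 x; rewrite expg1.
by rewrite porbit_sym tx_orbit /= eq_sym tx_x addn0.
Qed.

Lemma exists_moved_point t : t != 1%g -> exists x, t x != x.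
Proof.
move=> t_ne1; apply/existsP; apply: contraR t_ne1 => /existsPn fixed.
by apply/eqP/permP => x; rewrite perm1; apply/eqP; move: (fixed x); rewrite negbK.
Qed.

(* Peel transpositions off t: each changes the number of cycles by at most one. *)
Lemma card_porbitsM_le s t :
  #|porbits (t * s)| + #|porbits t| <= #|porbits s| + #|T|.
Proof.
move m_def : (#|T| - #|porbits t|) => m; elim: m s t m_def => [|m IH] s t m_def;
  have [->|/exists_moved_point [x tx_x]] := eqVneq t 1%g;
  rewrite ?mul1g ?card_porbits1 ?leqnn //.
  have := card_porbits_tperm_split tx_x.
  by have := card_porbits_le (tperm x (t x) * t); lia.
set u := (tperm x (t x) * t)%g.
have card_u := card_porbits_tperm_split tx_x; rewrite -/u in card_u.
have tE : t = (tperm x (t x) * u)%g by rewrite /u tpermKg.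
clearbody u.
have IHu : #|porbits (u * s)| + #|porbits u| <= #|porbits s| + #|T|.
  by apply: IH; lia.
have tsE : #|porbits (t * s)| <= #|porbits (u * s)| + 1.
  by rewrite {1}tE -mulgA card_porbits_tpermM_le.
lia.
Qed.

Section MergeCycles.
Variables (a b : {perm T}) (x : T).
Hypothesis bx_out : b x \notin porbit a x.
Let t := tperm x (b x).

Let x_neq_bx : x != b x.
Proof. by apply: contraNneq bx_out => <-; rewrite porbit_id. Qed.

Lemma card_porbits_merge : #|porbits (t * a)| + 1 = #|porbits a|.
Proof.
by have := porbits_mul_tperm a x (b x); rewrite -/t porbit_sym bx_out x_neq_bx /=; lia.
Qed.

Lemma card_porbits_split : #|porbits (b * t)| = #|porbits b| + 1.
Proof.
rewrite -porbitsV invMg tpermV -(porbitsV b).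
have := porbits_mul_tperm b^-1 x (b x); rewrite porbitV porbit_sym.
have -> : b x \in porbit b x by have := mem_porbit b 1 x; rewrite expg1.
by rewrite x_neq_bx /= addn0.
Qed.

Lemma merge_connected : (forall u v, connect (mrel b a) u v) ->
  forall u v, connect (mrel (b * t)%g (t * a)%g) u v.
Proof.
move=> conn; set r := mrel (b * t)%g (t * a)%g.
have bx_in : b x \in porbit (t * a) x.
  have := porbits_mul_tperm (t * a) x (b x); rewrite /t tpermKg -/t.
  rewrite porbit_sym x_neq_bx -card_porbits_merge; case: (_ \in _) => //=; lia.
have on_orbit u v : v \in porbit (t * a) u -> connect r u v.
  move/porbitP => [i ->]; rewrite permX; elim: i => [|i IH] //=.
  by apply: connect_trans IH (connect1 _); rewrite /r /mrel eqxx orbT.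
have to_t w : connect r w (t w).
  case: tpermP => [->|->|//]; first exact: on_orbit.
  by apply: on_orbit; rewrite porbit_sym.
have to_b u : connect r u (b u).
  apply: connect_trans (connect1 (_ : r u ((b * t)%g u))) _.
    by rewrite /r /mrel eqxx.
  by have := to_t ((b * t)%g u); rewrite permM /t tpermK.
have to_a u : connect r u (a u).
  apply: connect_trans (to_t u) (connect1 _).
  by rewrite /r /mrel !permM /t tpermK eqxx orbT.
move=> u v; apply: connect_sub (conn u v) => {}u {}v /orP[] /eqP ->.
  exact: to_b.
exact: to_a.
Qed.

End MergeCycles.

Lemma exists_dart_leaving_cycle (a b : {perm T}) :
  (forall u v, connect (mrel b a) u v) -> 1 < #|porbits a| ->
  exists x, b x \notin porbit a x.
Proof.
move=> conn gt1; apply/existsP; apply: contraLR gt1 => /existsPn stay.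
rewrite -leqNgt; apply/card_le1_eqP => _ _ /imsetP[x _ ->] /imsetP[y _ ->].
apply/eqP; rewrite eq_porbit_mem.
apply: (connect_ind (P := fun v => v \in porbit a x) (conn x y) (porbit_id a x)).
move=> u v /orP[] /eqP -> u_in;
  (have <- : porbit a u = porbit a x by apply/eqP; rewrite eq_porbit_mem).
  by move: (stay u); rewrite negbK.
by have := mem_porbit a 1 u; rewrite expg1.
Qed.

(* Induction on the cycles of a: while some b-step leaves its a-cycle, the
   transposition (x, b x) merges two cycles of a and splits one of b without
   changing b * a or connectivity. *)
Lemma porbits_euler_le (a b : {perm T}) :
  (forall u v, connect (mrel b a) u v) ->
  #|porbits a| + #|porbits b| + #|porbits (b * a)| <= #|T| + 2.
Proof.
move c_def : #|porbits a| => c; elim: c a b c_def => [|c IH] a b c_def conn.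
  by have := card_porbitsM_le a b; rewrite c_def; lia.
have [c0|c_gt0] := leqP c 0.
  by have := card_porbitsM_le a b; rewrite c_def; lia.
have [x bx_out] : exists x, b x \notin porbit a x.
  by apply: exists_dart_leaving_cycle conn _; rewrite c_def.
have card_ta : #|porbits (tperm x (b x) * a)| = c.
  by have := card_porbits_merge bx_out; rewrite c_def; lia.
have := IH _ _ card_ta (merge_connected bx_out conn).
rewrite -mulgA tpermKg (card_porbits_split bx_out) addn1 addnS addSn; exact.
Qed.

End PermOrbits.

Lemma iter_period_inj (T : Type) (f : T -> T) k :
  0 < k -> (forall x, iter k f x = x) -> injective f.
Proof.
by move=> k_gt0 fk; apply: (can_inj (g := iter k.-1 f)) => x; rewrite -iterSr prednK.
Qed.

Lemma order_le_period (T : finType) (f : T -> T) x m :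
  0 < m -> iter m f x = x -> order f x <= m.
Proof.
move=> m_gt0 fix_x; rewrite /order.
apply: leq_trans (_ : #|[seq iter i f x | i <- iota 0 m]| <= _); last first.
  by apply: leq_trans (card_size _) _; rewrite size_map size_iota.
apply: subset_leq_card; apply/subsetP => y fxy; apply/mapP.
exists (findex f x y %% m); first by rewrite mem_iota ltn_mod m_gt0.
have := iter_findex fxy; move: (findex f x y) => j <-.
by rewrite {1}(divn_eq j m) addnC iterD iterM (iter_fix _ fix_x).
Qed.

Lemma order_involution (T : finType) (f : T -> T) x :
  cancel f f -> f x != x -> order f x = 2.
Proof.
move=> fK fx_x; have le2 : order f x <= 2 by apply: order_le_period => //=; rewrite !fK.
apply/eqP; rewrite eqn_leq le2 /order.
apply: leq_trans (subset_leq_card (_ : [set x; f x] \subset _)).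
  by rewrite cards2 eq_sym fx_x.
by apply/subsetP => y; rewrite !inE => /orP[] /eqP ->; rewrite ?connect0 ?fconnect1.
Qed.

Lemma card_le_fcard_mul (T : finType) (f : T -> T) (A : {pred T}) m :
  injective f -> fclosed f A ->
  (forall x, x \in A -> order f x <= m) -> #|A| <= fcard f A * m.
Proof.
move=> fi clA le_m; have symf := fconnect_sym fi.
rewrite -sum1_card (partition_big (froot f) (fun r => froots f r && (r \in A))) /=.
  rewrite /n_comp_mem -sum1_card big_distrl /= mul1n.
  apply: leq_sum => r /andP[/eqP rr rA]; rewrite sum1_card.
  apply: leq_trans (le_m r rA); apply: subset_leq_card; apply/subsetP => x.
  by rewrite !inE => /andP[_ /eqP <-]; rewrite symf connect_root.
by move=> x xA; rewrite roots_root // -(closed_connect clA (connect_root _ x)).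
Qed.

Section CoverFibers.
Variables (X Y : finType) (eX nX : X -> X) (eY nY : Y -> Y) (pi : X -> Y).
Hypotheses (eXi : injective eX) (nXi : injective nX).
Hypotheses (pi_e : forall z, pi (eX z) = eY (pi z)) (pi_n : forall z, pi (nX z) = nY (pi z)).
Variable A : {pred X}.
Hypotheses (A_e : forall z, z \in A -> eX z \in A) (A_n : forall z, z \in A -> nX z \in A).
Hypothesis connY : forall y y', connect (mrel eY nY) y y'.

Definition fiber y := [set z in A | pi z == y].

Lemma card_fiber_le y y' : mrel eY nY y y' -> #|fiber y| <= #|fiber y'|.
Proof.
have step f g : injective f -> (forall z, z \in A -> f z \in A) ->
    (forall z, pi (f z) = g (pi z)) -> #|fiber y| <= #|fiber (g y)|.
  move=> fi A_f pi_f; rewrite -(card_imset _ fi); apply: subset_leq_card.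
  apply/subsetP => w /imsetP[z]; rewrite inE => /andP[zA /eqP <-] ->.
  by rewrite inE A_f //= pi_f.
by rewrite /mrel => /orP[] /eqP ->; [apply: (step eX) | apply: (step nX)].
Qed.

Lemma card_fiber_const y y' : #|fiber y| = #|fiber y'|.
Proof.
have le u v : #|fiber u| <= #|fiber v|.
  apply: (connect_ind (connY u v) (P := fun w => #|fiber u| <= #|fiber w|)) => // w w' r h.
  exact: leq_trans h (card_fiber_le r).
by apply/eqP; rewrite eqn_leq !le.
Qed.

Lemma card_cover (Q : {pred Y}) y0 :
  #|[pred z in A | pi z \in Q]| = #|Q| * #|fiber y0|.
Proof.
rewrite -[LHS]sum1_card (partition_big pi (mem Q)); last by move=> z /andP[].
rewrite -sum_nat_const; apply: eq_bigr => y yQ; rewrite -(card_fiber_const y y0) -sum1_card.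
apply: eq_bigl => z; rewrite !inE.
by case: eqP => [->|]; rewrite ?andbT ?andbF // (yQ : y \in Q) andbT.
Qed.

Lemma card_cover_all y0 : #|A| = #|Y| * #|fiber y0|.
Proof. by rewrite -(card_cover predT y0); apply: eq_card => z; rewrite !inE andbT. Qed.

End CoverFibers.

Section MapCounts.
Variables (D : finType) (e n : D -> D).
Hypotheses (eK : cancel e e) (e_fp : forall x, e x != x) (ni : injective n).

Lemma face_inj : injective (face e n).
Proof. by move=> x y /ni /(can_inj eK). Qed.

Lemma map_euler_le : (forall x y, connect (mrel e n) x y) ->
  fcard n D + fcard e D + fcard (face e n) D <= #|D| + 2.
Proof.
move=> conn; pose a := perm ni; pose b := perm (can_inj eK).
have := @porbits_euler_le D a b; rewrite -!fcard_porbits.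
rewrite (eq_fcard (f' := n)) ?(eq_fcard (f := b) (f' := e))
  ?(eq_fcard (f := (b * a)%g) (f' := face e n)).
- apply=> x y; rewrite (@eq_connect _ _ (mrel e n)) // => u v.
  by rewrite /mrel /= !permE.
- by move=> x; rewrite permM !permE.
- by move=> x; rewrite permE.
- by move=> x; rewrite permE.
Qed.

Lemma fcard_edges : fcard e D * 2 = #|D|.
Proof.
rewrite (fcard_order_set (can_inj eK)) //.
by apply/subsetP => x _; rewrite inE /= order_involution.
Qed.

Variables (k d r : nat) (x0 : D).
Hypotheses (hk : forall x, order n x = k) (hr : order (face e n) x0 = r).
Hypothesis hd : forall x, ~~ fconnect (face e n) x0 x -> order (face e n) x = d.
Let O := fconnect (face e n) x0.

Lemma fcard_vertices : fcard n D * k = #|D|.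
Proof. by rewrite (fcard_order_set ni) //; apply/subsetP => x _; rewrite inE /= hk. Qed.

Lemma card_other_faces : #|[predC O]| = #|D| - r.
Proof. by have := cardC O; rewrite -hr => <-; rewrite addKn. Qed.

Lemma fcard_other_faces : fcard (face e n) [predC O] * d = #|D| - r.
Proof.
rewrite (fcard_order_set face_inj) ?card_other_faces //.
  by apply/subsetP => x; rewrite !inE => /hd ->.
exact/predC_closed/connect_closed/fconnect_sym/face_inj.
Qed.

Lemma fcard_faces : fcard (face e n) D = (fcard (face e n) [predC O]).+1.
Proof.
by rewrite (n_compC O) n_comp_connect ?add1n //; apply/fconnect_sym/face_inj.
Qed.

Lemma dart_count : fcard n D + fcard (face e n) D = fcard e D + 2 ->
  #|D| * (2 * k + 2 * d) = k * d * #|D| + 2 * k * d + 2 * k * r.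
Proof.
have r_le_N : r <= #|D| by rewrite -hr /order max_card.
rewrite fcard_faces; have := fcard_vertices; have := fcard_edges; have := fcard_other_faces.
move: (fcard n D) (fcard e D) (fcard _ [predC O]) => V E F hF hE hV pl.
have {}hF : #|D| = F * d + r by lia.
nia.
Qed.

End MapCounts.

Section DegreeTwo.
Variables (D : finType) (e n : D -> D).
Hypotheses (eK : cancel e e) (ni : injective n) (n2 : involutive n).
Hypothesis connD : forall x y, connect (mrel e n) x y.
Let fi := face_inj eK ni.
Let symf := fconnect_sym fi.

Lemma face_orbit_e_n y x : fconnect (face e n) y x -> fconnect (face e n) y (e (n x)).
Proof. by move=> yx; rewrite (same_fconnect1_r fi) /face eK n2. Qed.

(* As n is an involution, e \o n inverts the face permutation, so a face orbit containing
   a whole edge {x, e x} is closed under e, hence under n. *)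
Lemma face_orbit_full y x : fconnect (face e n) y x -> fconnect (face e n) y (e x) ->
  forall z, fconnect (face e n) y z.
Proof.
move=> yx yex.
have e_iter j : fconnect (face e n) y (e (iter j (face e n) x)).
  by elim: j => //= j IH; apply: face_orbit_e_n.
have cl_e z : fconnect (face e n) y z -> fconnect (face e n) y (e z).
  move=> yz; have xz : fconnect (face e n) x z by rewrite symf in yx; apply: connect_trans yx yz.
  by rewrite -(iter_findex xz) e_iter.
have cl_n z : fconnect (face e n) y z -> fconnect (face e n) y (n z).
  by move=> /cl_e; rewrite (same_fconnect1_r fi) /face eK.
move=> z; apply: (connect_ind (connD y z)) => // u v /orP[] /eqP ->; [exact: cl_e | exact: cl_n].
Qed.

Lemma two_faces_same_length x0 y0 : ~~ fconnect (face e n) x0 y0 ->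
  #|[predC fconnect (face e n) x0]| <= order (face e n) y0 ->
  order (face e n) x0 = order (face e n) y0.
Proof.
move=> y0_out le_S; rewrite /order.
have e_out z v w : ~~ fconnect (face e n) z v -> fconnect (face e n) z w ->
    e w \notin fconnect (face e n) z.
  by move=> zv zw; apply: contra zv => zew; apply: face_orbit_full zw zew v.
have x0_out : ~~ fconnect (face e n) y0 x0 by rewrite symf.
have S_sub : fconnect (face e n) y0 \subset [predC fconnect (face e n) x0].
  apply/subsetP => z y0z; rewrite inE; apply: contra y0_out => x0z.
  by apply: connect_trans x0z _; rewrite symf.
have S_eq : fconnect (face e n) y0 =i [predC fconnect (face e n) x0].
  by apply/subset_cardP => //; apply/eqP; rewrite eqn_leq le_S subset_leq_card.
have le_img z v : ~~ fconnect (face e n) z v ->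
    #|fconnect (face e n) z| <= #|[predC fconnect (face e n) z]|.
  move=> zv; rewrite -(card_imset _ (can_inj eK)); apply: subset_leq_card.
  by apply/subsetP => _ /imsetP[w zw ->]; rewrite inE (e_out _ _ _ zv zw).
apply/eqP; rewrite eqn_leq (leq_trans (le_img _ _ y0_out)) ?(eq_card S_eq) //.
rewrite -(eq_card S_eq); apply: leq_trans (le_img _ _ x0_out) _.
apply: eq_leq; apply: eq_card => z; rewrite !inE.
by have := S_eq z; rewrite !inE => ->; rewrite negbK.
Qed.

End DegreeTwo.

Lemma connect_iter_face (T : finType) (e n : T -> T) z j :
  connect (mrel e n) z (iter j (face e n) z).
Proof.
elim: j => //= j IH; set w := iter j _ z; apply: connect_trans IH _.
by apply: connect_trans (connect1 (_ : mrel e n w (e w))) (connect1 _);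
  rewrite /mrel eqxx ?orbT.
Qed.

Section Component.
Variables (T : finType) (e n : T -> T) (z0 : T).

Lemma connect_mrel_e z : connect (mrel e n) z0 z -> connect (mrel e n) z0 (e z).
Proof. by move=> z0z; apply: connect_trans z0z (connect1 _); rewrite /mrel eqxx. Qed.

Lemma connect_mrel_n z : connect (mrel e n) z0 z -> connect (mrel e n) z0 (n z).
Proof. by move=> z0z; apply: connect_trans z0z (connect1 _); rewrite /mrel eqxx orbT. Qed.

Definition component : finType := {z : T | connect (mrel e n) z0 z}.
Definition component_e (u : component) : component :=
  exist _ (e (val u)) (connect_mrel_e (valP u)).
Definition component_n (u : component) : component :=
  exist _ (n (val u)) (connect_mrel_n (valP u)).

Lemma val_iter_component_n j u : val (iter j component_n u) = iter j n (val u).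
Proof. by elim: j => //= j ->. Qed.

Lemma val_iter_component_face j u :
  val (iter j (face component_e component_n) u) = iter j (face e n) (val u).
Proof. by elim: j => //= j ->. Qed.

Lemma component_connected : injective e -> injective n ->
  forall u v, connect (mrel component_e component_n) u v.
Proof.
move=> ei ni u v.
pose Q w := [exists v' : component,
  (val v' == w) && connect (mrel component_e component_n) u v'].
have u_v : connect (mrel e n) (val u) (val v).
  by apply: connect_trans (valP v); rewrite mrel_connect_sym ?(valP u).
have : Q (val v).
  apply: (connect_ind u_v); first by apply/existsP; exists u; rewrite eqxx connect0.
  move=> w w' /orP[] /eqP -> /existsP[v' /andP[/eqP <- uv']]; apply/existsP;
    [exists (component_e v') | exists (component_n v')];
    by rewrite eqxx /=; apply: connect_trans uv' (connect1 _); rewrite /mrel eqxx ?orbT.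
by case/existsP => v' /andP[/eqP /val_inj ->].
Qed.

End Component.

Definition prod_fun (X Y : Type) (f : X -> X) (g : Y -> Y) (z : X * Y) : X * Y :=
  (f z.1, g z.2).

Lemma iter_prod_fun (X Y : Type) (f : X -> X) (g : Y -> Y) j z :
  iter j (prod_fun f g) z = (iter j f z.1, iter j g z.2).
Proof. by case: z => x y; elim: j => //= j ->. Qed.

Lemma face_prod_fun (X Y : finType) (e n : X -> X) (eP nP : Y -> Y) :
  face (prod_fun e eP) (prod_fun n nP) = prod_fun (face e n) (face eP nP).
Proof. by []. Qed.

Lemma card_sig_pred (T : finType) (C Q : pred T) :
  #|[pred z : {x | C x} | Q (val z)]| = #|[pred x | C x && Q x]|.
Proof.
rewrite -(card_image val_inj); apply: eq_card => x; rewrite !inE.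
apply/imageP/andP => [[z zQ ->]|[Cx Qx]]; first by split => //; apply: valP.
by exists (exist _ x Cx).
Qed.

Section ProductCover.
Variables (D P : finType) (e n : D -> D) (eP nP : P -> P) (x0 : D) (p0 : P).
Hypotheses (eK : cancel e e) (e_fp : forall x, e x != x) (ni : injective n).
Hypothesis connD : forall x y, connect (mrel e n) x y.
Hypotheses (ePK : cancel eP eP) (nPi : injective nP).
Hypothesis connP : forall p q, connect (mrel eP nP) p q.

Local Notation eZ := (prod_fun e eP).
Local Notation nZ := (prod_fun n nP).
Local Notation z0 := (x0, p0).
Local Notation C := (connect (mrel eZ nZ) z0).
Local Notation a := #|fiber fst C x0|.
Local Notation b := #|fiber snd C p0|.

Let eZK : cancel eZ eZ. Proof. by move=> [x p]; rewrite /prod_fun /= eK ePK. Qed.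
Let eZi := can_inj eZK.
Let nZi : injective nZ. Proof. by move=> [x p] [y q] [] /ni -> /nPi ->. Qed.
Let C_e z : z \in C -> eZ z \in C. Proof. exact: connect_mrel_e. Qed.
Let C_n z : z \in C -> nZ z \in C. Proof. exact: connect_mrel_n. Qed.

Lemma card_component_fst (Q : {pred D}) : #|[pred z in C | z.1 \in Q]| = #|Q| * a.
Proof. exact: (card_cover (pi := fst) eZi nZi _ _ C_e C_n connD). Qed.

Lemma card_component_snd (Q : {pred P}) : #|[pred z in C | z.2 \in Q]| = #|Q| * b.
Proof. exact: (card_cover (pi := snd) eZi nZi _ _ C_e C_n connP). Qed.

Lemma card_component_D : #|C| = #|D| * a.
Proof. exact: (card_cover_all (pi := fst) eZi nZi _ _ C_e C_n connD). Qed.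

Lemma card_component_P : #|C| = #|P| * b.
Proof. exact: (card_cover_all (pi := snd) eZi nZi _ _ C_e C_n connP). Qed.

Lemma sheets_gt0 : 0 < a.
Proof. by apply/card_gt0P; exists z0; rewrite inE eqxx andbT; apply: connect0. Qed.

(* With one sheet over D, the face of x0 lifts to a single face lying over the face of p0. *)
Lemma one_sheet_face_lift : a = 1 ->
  #|fconnect (face e n) x0| <= #|fconnect (face eP nP) p0| * b.
Proof.
move=> a1; rewrite -card_component_snd.
have -> : #|fconnect (face e n) x0| = #|[pred z in C | z.1 \in fconnect (face e n) x0]|.
  by rewrite card_component_fst a1 muln1.
apply: subset_leq_card; apply/subsetP => z; rewrite !inE => /andP[zC x0z]; rewrite zC /=.
have := iter_findex x0z; move: (findex _ _ _) => j z1E.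
have lift : iter j (face eZ nZ) z0 = z.
  have fiber1 : #|fiber fst C z.1| <= 1.
    by rewrite -a1 (card_fiber_const (pi := fst) eZi nZi _ _ C_e C_n connD _ x0).
  apply: (card_le1_eqP fiber1); rewrite inE ?eqxx ?andbT //.
  by apply/andP; split; [exact: connect_iter_face | rewrite face_prod_fun iter_prod_fun z1E].
by rewrite -lift face_prod_fun iter_prod_fun fconnect_iter.
Qed.

Variables (k d r : nat).
Hypotheses (hk : forall x, order n x = k) (hr : order (face e n) x0 = r).
Hypothesis hd : forall x, ~~ fconnect (face e n) x0 x -> order (face e n) x = d.
Hypotheses (nPk : forall p, iter k nP p = p) (fPd : forall p, iter d (face eP nP) p = p).
Hypothesis d_gt0 : 0 < d.

Local Notation X := (component eZ nZ z0).
Local Notation eX := (@component_e _ eZ nZ z0).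
Local Notation nX := (@component_n _ eZ nZ z0).
Local Notation O := (fconnect (face e n) x0).
Local Notation A1 := [pred u : X | (val u).1 \notin O].

Let eXK : cancel eX eX. Proof. by move=> u; apply: val_inj; apply: eZK. Qed.
Let nXi : injective nX. Proof. by move=> u v /(congr1 val) /nZi /val_inj. Qed.
Let r_gt0 : 0 < r. Proof. by rewrite -hr order_gt0. Qed.

Let card_X_fst (Q : pred D) : #|[pred u : X | Q (val u).1]| = #|[pred x | Q x]| * a.
Proof. by rewrite (card_sig_pred _ (fun z => Q z.1)) -card_component_fst; apply: eq_card. Qed.

Lemma card_cover_X : #|X| = #|D| * a.
Proof. by rewrite -card_component_D card_sig; apply: eq_card. Qed.

Lemma cover_vertices : #|X| <= fcard nX X * k.
Proof.
apply: card_le_fcard_mul => // u _; apply: order_le_period; first by rewrite -(hk x0) order_gt0.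
apply: val_inj; rewrite val_iter_component_n iter_prod_fun; case: (val u) => x p /=.
by rewrite nPk -{1}(hk x) iter_order.
Qed.

Lemma cover_edges : fcard eX X * 2 = #|X|.
Proof.
rewrite (fcard_order_set (can_inj eXK)) //; apply/subsetP => u _.
rewrite inE /= order_involution // -(inj_eq val_inj) /=.
by case: (val u) => x p; rewrite xpair_eqE negb_and e_fp.
Qed.

Let fclosed_A1 : fclosed (face eX nX) A1.
Proof. by move=> u v /eqP <-; rewrite !inE /= (same_fconnect1_r (face_inj eK ni)). Qed.

Lemma cover_faces_ordinary : (#|D| - r) * a <= fcard (face eX nX) A1 * d.
Proof.
rewrite -(card_other_faces hr) -card_X_fst.
apply: card_le_fcard_mul => //; first exact: face_inj.
move=> u; rewrite inE => uO; apply: order_le_period => //.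
apply: val_inj; rewrite val_iter_component_face face_prod_fun iter_prod_fun.
by move: uO; case: (val u) => x p /= xO; rewrite fPd -{1}(hd xO) (iter_order (face_inj eK ni)).
Qed.

Lemma cover_faces_special : a <= fcard (face eX nX) [predC A1] * d.
Proof.
have card_special : #|[predC A1]| = r * a.
  by rewrite -hr -card_X_fst; apply: eq_card => u; rewrite !inE negbK.
have iter_O x : x \in O -> iter r (face e n) x = x.
  move=> x0x; have := iter_findex x0x; move: (findex _ _ _) => j <-.
  by rewrite -iterD addnC iterD -{1}hr (iter_order (face_inj eK ni)).
rewrite -(leq_pmul2l r_gt0) -card_special mulnCA.
apply: card_le_fcard_mul; [exact: face_inj | exact: predC_closed |].
move=> u; rewrite !inE negbK => uO; apply: order_le_period; first by rewrite muln_gt0 r_gt0.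
apply: val_inj; rewrite val_iter_component_face face_prod_fun iter_prod_fun.
move: uO; case: (val u) => x p /= x0x; congr (_, _).
  by rewrite mulnC iterM (iter_fix _ (iter_O _ x0x)).
by rewrite iterM (iter_fix _ (fPd p)).
Qed.

Lemma cover_euler_bound :
  2 * d * (#|D| * a) + 2 * k * ((#|D| - r) * a) + 2 * k * a <= k * d * (#|D| * a) + 4 * k * d.
Proof.
have := map_euler_le eXK nXi (component_connected (can_inj eZK) nZi).
rewrite (n_compC A1 (frel (face eX nX))) card_cover_X.
have := cover_vertices; have := cover_edges; have := cover_faces_ordinary.
have := cover_faces_special; rewrite card_cover_X.
move: (fcard nX X) (fcard eX X) (fcard _ A1) (fcard _ [predC A1]) => V E F1 F2 hF2 hF1 hE hV eu.
have := leq_mul (leqnn (2 * d)) hV; have := leq_mul (leqnn (2 * k)) hF1.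
have := leq_mul (leqnn (2 * k)) hF2; have := leq_mul (leqnn (2 * k * d)) eu.
have := congr1 (muln (k * d)) hE; lia.
Qed.

Hypothesis planar : fcard n D + fcard (face e n) D = fcard e D + 2.
Hypothesis count_P : #|P| * (2 * k + 2 * d) = 4 * k * d + #|P| * k * d.

Lemma covered_face_length : r = d.
Proof.
have count := dart_count eK e_fp ni hk hr hd planar.
have k_gt0 : 0 < k by rewrite -(hk x0) order_gt0.
have r_le_N : r <= #|D| by rewrite -hr /order max_card.
have sheets : a * (d + r) = 2 * b * d.
  have NM : #|D| * a = #|P| * b by rewrite -card_component_D card_component_P.
  apply/eqP; rewrite -(eqn_pmul2l (_ : 0 < 2 * k)) ?muln_gt0 //; apply/eqP.
  have := congr1 (muln a) count; have := congr1 (muln b) count_P; nia.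
have [a_le1|a_gt1] := leqP a 1.
  have a1 : a = 1 by apply/eqP; rewrite eqn_leq a_le1 sheets_gt0.
  have face_p0 : #|fconnect (face eP nP) p0| <= d by apply: order_le_period.
  have lift : r <= d * b.
    rewrite -hr; apply: leq_trans (one_sheet_face_lift a1) _.
    by rewrite leq_mul2r face_p0 orbT.
  rewrite a1 mul1n in sheets.
  have b_le1 : b <= 1 by rewrite -(leq_pmul2r d_gt0); lia.
  by move: sheets lift b_le1; case: b => [|[|//]]; lia.
have := cover_euler_bound; have := congr1 (muln a) count.
rewrite -(subnK r_le_N) addnK; move: (#|D| - r) => M count_a euler.
nia.
Qed.

End ProductCover.

Lemma platonic_types k d : 3 <= k -> 3 <= d -> k * d < 2 * k + 2 * d ->
  (k = 3 /\ (d = 3 \/ d = 4 \/ d = 5)) \/ (d = 3 /\ (k = 4 \/ k = 5)).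
Proof.
move=> k3 d3 lt_kd; have k6 : k < 6 by nia.
have d6 : d < 6 by nia.
move: k3 d3 lt_kd k6 d6.
by case: k => [|[|[|[|[|[|k]]]]]] //; case: d => [|[|[|[|[|[|d]]]]]] //; auto.
Qed.

Definition map_of_type (P : finType) (eP nP : P -> P) (k d : nat) : Prop :=
  [/\ cancel eP eP, forall p q, connect (mrel eP nP) p q,
      forall p, iter k nP p = p & forall p, iter d (face eP nP) p = p].

Section MapTable.
Variables (M : nat) (eL nL : seq nat).
Local Notation fe := (nth 0 eL).
Local Notation fn := (nth 0 nL).

Fixpoint table_reach j (s : seq nat) : seq nat :=
  if j is j'.+1 then table_reach j' (undup (s ++ map fe s ++ map fn s)) else s.

Definition map_tableb (k d : nat) : bool :=
  [&& 0 < k,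
      all (fun i => [&& fe i < M.+1, fn i < M.+1, fe (fe i) == i &
                      [&& fe i != i, iter k fn i == i & iter d (fun x => fn (fe x)) i == i]])
          (iota 0 M.+1)
    & all (mem (table_reach M.+1 [:: 0])) (iota 0 M.+1)].

Definition table_fun (l : seq nat) (i : 'I_M.+1) : 'I_M.+1 := inord (nth 0 l i).

Variables (k d : nat).
Hypothesis table_ok : map_tableb k d.
Local Notation tE := (table_fun eL).
Local Notation tN := (table_fun nL).

Lemma map_table_entry i : i < M.+1 -> [&& fe i < M.+1, fn i < M.+1, fe (fe i) == i &
  [&& fe i != i, iter k fn i == i & iter d (fun x => fn (fe x)) i == i]].
Proof.
move=> lt_iM; case/and3P: table_ok => _ /allP entries _.
by apply: (entries i); rewrite mem_iota.
Qed.

Lemma val_table_e i : tE i = fe i :> nat.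
Proof. by rewrite inordK //; case/and4P: (map_table_entry (ltn_ord i)). Qed.

Lemma val_table_n i : tN i = fn i :> nat.
Proof. by rewrite inordK //; case/and4P: (map_table_entry (ltn_ord i)). Qed.

Lemma table_reach_connected j s :
  (forall x, x \in s -> x < M.+1 /\ connect (mrel tE tN) ord0 (inord x)) ->
  forall x, x \in table_reach j s -> x < M.+1 /\ connect (mrel tE tN) ord0 (inord x).
Proof.
elim: j s => //= j IH s Hs; apply: IH => x; rewrite mem_undup !mem_cat.
case/or3P => [/Hs //| /mapP[y ys ->] | /mapP[y ys ->]];
  have [y_lt cy] := Hs y ys; case/and4P: (map_table_entry y_lt) => e_lt n_lt _ _;
  split => //; apply: connect_trans cy (connect1 _); apply/orP; [left | right];
  by apply/eqP/ord_inj; rewrite ?val_table_e ?val_table_n !inordK.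
Qed.

Lemma map_tableP : map_of_type tE tN k d.
Proof.
have entry (i : 'I_M.+1) := map_table_entry (ltn_ord i).
have iter_n j i : iter j tN i = iter j fn i :> nat.
  by elim: j => //= j IH; rewrite val_table_n IH.
have iter_f j i : iter j (face tE tN) i = iter j (fun x => fn (fe x)) i :> nat.
  by elim: j => //= j IH; rewrite val_table_n val_table_e IH.
have tEK : cancel tE tE.
  by move=> i; apply: ord_inj; rewrite !val_table_e; case/and4P: (entry i) => _ _ /eqP.
have tN_period i : iter k tN i = i.
  by apply: ord_inj; rewrite iter_n; case/and4P: (entry i) => _ _ _ /and3P[_ /eqP].
have tF_period i : iter d (face tE tN) i = i.
  by apply: ord_inj; rewrite iter_f; case/and4P: (entry i) => _ _ _ /and3P[_ _ /eqP].
have start x : x \in [:: 0] -> x < M.+1 /\ connect (mrel tE tN) ord0 (inord x).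
  rewrite inE => /eqP ->; split => //.
  by rewrite (_ : inord 0 = ord0) //; apply: ord_inj; rewrite inordK.
have conn0 (i : 'I_M.+1) : connect (mrel tE tN) ord0 i.
  have i_reached : (i : nat) \in table_reach M.+1 [:: 0].
    case/and3P: table_ok => _ _ /allP reached.
    by apply: (reached i); rewrite mem_iota ltn_ord.
  by have [_] := table_reach_connected start i_reached; rewrite inord_val.
have tNi : injective tN by apply: iter_period_inj tN_period; case/andP: table_ok.
split=> // i j; apply: connect_trans (conn0 j).
by rewrite mrel_connect_sym ?conn0 //; apply: can_inj tEK.
Qed.

End MapTable.

(* Rotation systems of the platonic solids: entry i of each list is the image of dart i. *)
Definition tetrahedron_e :=
  [:: 3; 6; 9; 0; 7; 10; 1; 4; 11; 2; 5; 8].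
Definition tetrahedron_n :=
  [:: 1; 2; 0; 5; 3; 4; 7; 8; 6; 11; 9; 10].
Definition cube_e :=
  [:: 3; 6; 12; 0; 9; 15; 1; 10; 18; 4; 7; 21; 2; 16; 19; 5; 13; 22; 8; 14; 23; 11; 17;
     20].
Definition cube_n :=
  [:: 1; 2; 0; 5; 3; 4; 7; 8; 6; 11; 9; 10; 14; 12; 13; 16; 17; 15; 20; 18; 19; 22; 23;
     21].
Definition octahedron_e :=
  [:: 8; 12; 16; 20; 9; 13; 17; 21; 0; 4; 18; 22; 1; 5; 19; 23; 2; 6; 10; 14; 3; 7; 11;
     15].
Definition octahedron_n :=
  [:: 2; 3; 1; 0; 7; 6; 4; 5; 11; 10; 8; 9; 14; 15; 13; 12; 18; 19; 17; 16; 23; 22; 20;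
     21].
Definition dodecahedron_e :=
  [:: 24; 27; 30; 28; 33; 48; 31; 36; 42; 37; 49; 51; 25; 39; 45; 34; 46; 57; 40; 43; 54;
     52; 55; 58; 0; 12; 44; 1; 3; 47; 2; 6; 50; 4; 15; 53; 7; 9; 56; 13; 18; 59; 8; 19;
     26; 14; 16; 29; 5; 10; 32; 11; 21; 35; 20; 22; 38; 17; 23; 41].
Definition dodecahedron_n :=
  [:: 1; 2; 0; 4; 5; 3; 7; 8; 6; 10; 11; 9; 13; 14; 12; 16; 17; 15; 19; 20; 18; 23; 21;
     22; 26; 24; 25; 29; 27; 28; 32; 30; 31; 34; 35; 33; 37; 38; 36; 40; 41; 39; 43; 44;
     42; 46; 47; 45; 49; 50; 48; 53; 51; 52; 56; 54; 55; 59; 57; 58].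
Definition icosahedron_e :=
  [:: 5; 10; 25; 30; 35; 0; 11; 15; 36; 40; 1; 6; 20; 31; 41; 7; 37; 42; 45; 55; 12; 32;
     43; 46; 50; 2; 33; 38; 51; 56; 3; 13; 21; 26; 52; 4; 8; 16; 27; 57; 9; 14; 17; 22;
     47; 18; 23; 44; 53; 58; 24; 28; 34; 48; 59; 19; 29; 39; 49; 54].
Definition icosahedron_n :=
  [:: 1; 3; 4; 2; 0; 8; 5; 9; 7; 6; 11; 14; 13; 10; 12; 16; 19; 15; 17; 18; 22; 20; 23;
     24; 21; 26; 28; 25; 29; 27; 31; 32; 34; 30; 33; 38; 35; 36; 39; 37; 42; 40; 44; 41;
     43; 49; 47; 45; 46; 48; 53; 52; 50; 54; 51; 57; 59; 56; 55; 58].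

Lemma platonic_map k d : 3 <= k -> 3 <= d -> k * d < 2 * k + 2 * d ->
  exists (P : finType) (eP nP : P -> P),
    map_of_type eP nP k d /\ #|P| * (2 * k + 2 * d) = 4 * k * d + #|P| * k * d.
Proof.
have table M eL nL k' d' : map_tableb M eL nL k' d' ->
    M.+1 * (2 * k' + 2 * d') = 4 * k' * d' + M.+1 * k' * d' ->
    exists (P : finType) (eP nP : P -> P),
      map_of_type eP nP k' d' /\ #|P| * (2 * k' + 2 * d') = 4 * k' * d' + #|P| * k' * d'.
  move=> ok count; exists 'I_M.+1, (@table_fun M eL), (@table_fun M nL).
  by rewrite card_ord; split => //; apply: map_tableP.
move=> k3 d3 /(platonic_types k3 d3) [[-> [->|[->|->]]]|[-> [->|->]]].
- by apply: (table 11 tetrahedron_e tetrahedron_n); vm_compute.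
- by apply: (table 23 cube_e cube_n); vm_compute.
- by apply: (table 59 dodecahedron_e dodecahedron_n); vm_compute.
- by apply: (table 23 octahedron_e octahedron_n); vm_compute.
- by apply: (table 59 icosahedron_e icosahedron_n); vm_compute.
Qed.

Section NearlyPlatonic.
Variables (D : finType) (e n : D -> D) (k d r : nat) (x0 : D).
Hypotheses (eK : cancel e e) (e_fp : forall x, e x != x) (ni : injective n).
Hypothesis connD : forall x y, connect (mrel e n) x y.
Hypothesis planar : fcard n D + fcard (face e n) D = fcard e D + 2.
Hypotheses (hk : forall x, order n x = k) (hr : order (face e n) x0 = r).
Hypothesis hd : forall x, ~~ fconnect (face e n) x0 x -> order (face e n) x = d.
Hypotheses (d3 : 3 <= d) (ordinary_face : d <= #|D| - r).

Let count := dart_count eK e_fp ni hk hr hd planar.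

Lemma degree_neq1 : k != 1.
Proof. by apply/eqP => k1; move: count; rewrite k1; nia. Qed.

Lemma degree2_face_length : k = 2 -> r = d.
Proof.
move=> k2; have n2 : involutive n by move=> x; have := iter_order ni x; rewrite hk k2.
have other : #|[predC fconnect (face e n) x0]| = d.
  by rewrite (card_other_faces hr); move: count; rewrite k2; lia.
have [y0 y0_out] : exists y0, y0 \notin fconnect (face e n) x0.
  have : 0 < #|[predC fconnect (face e n) x0]| by rewrite other; lia.
  by case/card_gt0P => y; rewrite inE; exists y.
by rewrite -hr -(hd y0_out); apply: two_faces_same_length => //; rewrite other hd.
Qed.

Lemma degree_ge3_face_length : 2 < k -> r = d.
Proof.
move=> k3; have d_gt0 : 0 < d by lia.
have N_gt0 : 0 < #|D| by lia.
have [|P [eP [nP [[ePK connP nPk fPd] count_P]]]] := platonic_map k3 d3; first nia.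
have nPi : injective nP by apply: iter_period_inj nPk; lia.
have [p0 _] : exists p0 : P, true.
  by apply/card_gt0P; rewrite lt0n; apply/eqP => P0; move: count_P; rewrite P0; nia.
exact: (covered_face_length p0 eK e_fp ni connD ePK nPi connP hk hr hd nPk fPd).
Qed.

Lemma nearly_platonic_face_length : r = d.
Proof.
have k_gt0 : 0 < k by rewrite -(hk x0) order_gt0.
have [k_le2|k_gt2] := leqP k 2; last exact: degree_ge3_face_length.
by apply: degree2_face_length; have := degree_neq1; lia.
Qed.

End NearlyPlatonic.

Theorem mainTheorem8 (D : finType) (e n : D -> D) :
  ~ one_nearly_platonic e n.
Proof.
case=> [[[eK e_fp ni] connD planar] _ regular faces2 [d [r [x0 [d3 _ dr hr hd]]]]].
have hk x : order n x = order n x0 := regular x x0.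
have ordinary_face : d <= #|D| - r.
  rewrite -(fcard_other_faces eK ni hr hd) leq_pmull //.
  by move: faces2; rewrite /num_faces (fcard_faces eK ni x0).
move: dr; rewrite (nearly_platonic_face_length eK e_fp ni connD planar hk hr hd d3 ordinary_face).
by rewrite eqxx.
Qed.
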